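(* Let $v(0)\in\mathcal N^*$, $v(0)\ne0$, and let $E_0$ be its critical core. For all $w\ge1/m_1(0)$, $$\frac{m_1(0)}{m_2(0)}\frac1{w^2}\le E_0(w)\le\frac1{w^2}\qquad\text{and}\qquad\Big|\frac{dE_0}{dw}(w)\Big|\le4m_2(0)^2m_3(0)=:D.$$ Consequently $\sup_{w\ge1/m_1(0)}E_0(w)\le m_1(0)^2$, $\min_{1/m_1(0)\le y\le w}E_0(y)\ge\frac{m_1(0)}{m_2(0)}\frac1{w^2}$, and for $1/m_1(0)\le w_1\le w_2$, $\max_{[w_1,w_2]}E_0-\min_{[w_1,w_2]}E_0\le D(w_2-w_1)$.
   Context: $\mathcal N^*$: finitely supported sequences $v=(v_k)_{k\ge1}$ of nonnegative reals; $m_j(0)=\sum_kk^jv_k(0)$ for $j=1,2,3$. Critical core: with $U_0(x)=\sum_kv_k(0)(e^{-kx}-1)$, the function $E_0:(0,\infty)\to(0,\infty)$ is defined by $E_0\big(-1/U_0'(x)\big)=\frac{(-U_0'(x))^3}{U_0''(x)}$ for $x\in\mathbb R$ (the map $x\mapsto-1/U_0'(x)$ is a bijection $\mathbb R\to(0,\infty)$); equivalently $E_0=F_0'$ where $F_0(-1/U_0'(x))=-U_0(x)$. *)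

From mathcomp Require Import all_boot all_order all_algebra.
From mathcomp Require Import all_classical all_reals all_analysis.
Set Implicit Arguments. Unset Strict Implicit. Unset Printing Implicit Defensive.
Import Order.TTheory GRing.Theory Num.Theory.
Local Open Scope ring_scope.

(* A finitely supported sequence v = (v_k)_{k>=1} is given by v : nat -> R
   together with a bound N on its support: only v 1, ..., v N enter.  *)

Definition moment {R : realType} (N : nat) (v : nat -> R) (j : nat) : R :=
  \sum_(1 <= k < N.+1) (k%:R ^+ j) * v k.

Definition U0 {R : realType} (N : nat) (v : nat -> R) (x : R) : R :=
  \sum_(1 <= k < N.+1) v k * (expR (- (k%:R * x)) - 1).

(* E is the critical core of v: E(-1/U_0'(x)) = (-U_0'(x))^3 / U_0''(x) for all real x.
   Since x |-> -1/U_0'(x) is a bijection R -> (0,oo), this determines E on (0,oo). *)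
Definition is_critical_core {R : realType} (N : nat) (v : nat -> R) (E : R -> R) : Prop :=
  forall x : R,
    E (- (derive1 (U0 N v) x)^-1) =
      (- derive1 (U0 N v) x) ^+ 3 / derive1n 2 (U0 N v) x.

From mathcomp Require Import all_boot all_order all_algebra.
From mathcomp Require Import all_classical all_reals all_analysis.
From mathcomp Require Import ring lra.
Import Order.TTheory GRing.Theory Num.Theory.
Local Open Scope ring_scope.

(* Write S_j(x) = sum_k k^j v_k e^{-kx} ([lmoment j]), so that U_0' = -S_1, U_0'' = S_2 and
   S_j' = -S_{j+1}.  The map phi = 1/S_1 is an increasing bijection of R onto
   (0,oo) with phi 0 = 1/m_1, so w >= 1/m_1 exactly when w = phi x with x >= 0,
   and then E w = S_1^3/S_2 while 1/w^2 = S_1^2.  For x >= 0 we have S_1 <= S_2,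
   S_j <= m_j and, by Chebyshev's sum inequality, m_1 S_2 <= m_2 S_1; this gives
   the two-sided bound on E.  By the inverse function theorem
   E' = S_1^2 S_3 (S_1/S_2)^3 - 3 S_1^3 (S_1/S_2), whose two nonnegative terms
   are at most m_2^2 m_3 and 3 m_2^2 m_3; the mean value theorem then bounds
   the oscillation of E. *)

Lemma ler_sum_nat_term (R : numDomainType) (m n i : nat) (F : nat -> R) :
  (m <= i < n)%N -> (forall k, (m <= k < n)%N -> 0 <= F k) ->
  F i <= \sum_(m <= k < n) F k.
Proof.
move=> ri F_ge0; rewrite (bigD1_seq i) ?mem_index_iota ?iota_uniq //=.
rewrite lerDl big_seq_cond sumr_ge0 // => k /andP[+ _].
by rewrite mem_index_iota; apply: F_ge0.
Qed.

Lemma is_derive_sum_seq (R : numFieldType) (V W : normedModType R) (I : Type)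
    (r : seq I) (f : I -> V -> W) (df : I -> W) (x v : V) :
  (forall i, is_derive x v (f i) (df i)) ->
  is_derive x v (fun y => \sum_(i <- r) f i y) (\sum_(i <- r) df i).
Proof.
move=> f_df; elim: r => [|i r IHr].
  under eq_fun do rewrite big_nil; rewrite big_nil; exact: is_derive_cst.
under eq_fun do rewrite big_cons; rewrite big_cons.
exact: is_deriveD.
Qed.

Lemma chebyshev_sum (R : realDomainType) (I : Type) (r : seq I) (p f g : I -> R) :
  (forall i, 0 <= p i) -> (forall i j, (f i - f j) * (g i - g j) <= 0) ->
  (\sum_(i <- r) p i) * (\sum_(i <- r) p i * f i * g i) <=
    (\sum_(i <- r) p i * f i) * (\sum_(i <- r) p i * g i).
Proof.
move=> p_ge0 fg_anti; rewrite -subr_ge0.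
pose A i j := p i * p j * g j * (f i - f j).
have -> : (\sum_(i <- r) p i * f i) * (\sum_(i <- r) p i * g i) -
    (\sum_(i <- r) p i) * (\sum_(i <- r) p i * f i * g i) =
    \sum_(i <- r) \sum_(j <- r) A i j.
  rewrite !mulr_suml -sumrB; apply: eq_bigr => i _.
  rewrite !mulr_sumr -sumrB; apply: eq_bigr => j _; rewrite /A; ring.
have swapA : \sum_(i <- r) \sum_(j <- r) A i j = \sum_(i <- r) \sum_(j <- r) A j i.
  exact: exchange_big.
(* Symmetrizing, 2 * \sum A is a sum of the terms -p_i p_j (f_i - f_j)(g_i - g_j) >= 0. *)
suff : 0 <= \sum_(i <- r) \sum_(j <- r) (A i j + A j i).
  by under eq_bigr do rewrite big_split /=; rewrite big_split /= -swapA; lra.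
apply: sumr_ge0 => i _; apply: sumr_ge0 => j _.
have -> : A i j + A j i = - (p i * p j) * ((f i - f j) * (g i - g j)) by rewrite /A; ring.
by rewrite mulNr -mulrN mulr_ge0 ?mulr_ge0 // oppr_ge0.
Qed.

Lemma ler_norm_core_deriv (R : realFieldType) (s1 s2 s3 a b : R) :
  0 < s1 <= s2 -> 0 <= s3 <= b -> s1 <= a -> a <= b ->
  `|s1 ^+ 2 * s3 * (s1 / s2) ^+ 3 - 3 * s1 ^+ 3 * (s1 / s2)| <= 4 * a ^+ 2 * b.
Proof.
case/andP=> s1_gt0 s12 /andP[s3_ge0 s3b] s1a ab.
set r := s1 / s2.
have r_ge0 : 0 <= r by rewrite divr_ge0 // ltW // (lt_le_trans s1_gt0).
have r_le1 : r <= 1 by rewrite ler_pdivrMr ?mul1r // (lt_le_trans s1_gt0).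
clearbody r.
have s1a2 : s1 ^+ 2 <= a ^+ 2 by rewrite lerXn2r // ?nnegrE ltW // (lt_le_trans s1_gt0).
have s1s3_le : s1 ^+ 2 * s3 <= a ^+ 2 * b by rewrite ler_pM ?exprn_ge0 // ltW.
have s1_3_le : s1 ^+ 3 <= a ^+ 2 * b.
  by rewrite exprSr ler_pM ?exprn_ge0 ?(le_trans s1a) // ltW.
have s1_ge0 : 0 <= s1 by apply: ltW.
have P_ge0 : 0 <= s1 ^+ 2 * s3 * r ^+ 3 by rewrite !mulr_ge0 ?exprn_ge0.
have Q_ge0 : 0 <= s1 ^+ 3 * r by rewrite !mulr_ge0 ?exprn_ge0.
have P_le : s1 ^+ 2 * s3 * r ^+ 3 <= a ^+ 2 * b.
  apply: le_trans s1s3_le.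
  by rewrite ler_piMr ?mulr_ge0 ?exprn_ge0 ?exprn_ile1 // ltW.
have Q_le : s1 ^+ 3 * r <= a ^+ 2 * b.
  apply: le_trans s1_3_le.
  by rewrite ler_piMr ?exprn_ge0 // ltW.
rewrite ler_norml; apply/andP; split; lra.
Qed.

Lemma lef_inv_sqr (R : numFieldType) (a b : R) : 0 < a -> a <= b ->
  (b ^+ 2)^-1 <= (a ^+ 2)^-1.
Proof.
move=> a_gt0 ab; have b_gt0 := lt_le_trans a_gt0 ab.
by rewrite lef_pV2 ?posrE ?exprn_gt0 // lerXn2r // nnegrE ltW.
Qed.

Section CriticalCore.
Variables (R : realType) (N : nat) (v : nat -> R).
Hypothesis v_ge0 : forall k, 0 <= v k.
Variable k0 : nat.
Hypothesis k0_range : (1 <= k0 <= N)%N.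
Hypothesis vk0_neq0 : v k0 != 0.

Definition lmoment (j : nat) (x : R) : R :=
  \sum_(1 <= k < N.+1) (k%:R ^+ j * v k) * expR (- (k%:R * x)).

Lemma lmoment0 j : lmoment j 0 = moment N v j.
Proof. by apply: eq_bigr => k _; rewrite mulr0 oppr0 expR0 mulr1. Qed.

Lemma is_derive_lmoment j (x : R) : is_derive x 1 (lmoment j) (- lmoment j.+1 x).
Proof.
rewrite /lmoment -sumrN; apply: is_derive_sum_seq => k.
set c := k%:R ^+ j * v k.
have dlin : is_derive x 1 (fun y : R => - (k%:R * y)) (- k%:R).
  have := is_deriveN (is_deriveZ k%:R (is_derive_id x 1)).
  by rewrite /GRing.scale /= mulr1.
have := is_deriveZ c (is_derive1_comp (is_derive_expR _) dlin).
congr is_derive; rewrite /GRing.scale /= /c exprS; ring.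
Qed.

Lemma derive1_U0 : derive1 (U0 N v) = fun x => - lmoment 1 x.
Proof.
apply: funext => x; rewrite derive1E; apply: derive_val.
have U0E : U0 N v = fun y => lmoment 0 y - moment N v 0.
  apply: funext => y; rewrite /U0 /lmoment /moment -sumrB.
  by apply: eq_bigr => k _; rewrite expr0 !mul1r mulrBr mulr1.
rewrite U0E -[X in is_derive _ _ _ X]subr0.
exact: is_deriveB (is_derive_lmoment 0 x) (is_derive_cst (moment N v 0) _ _).
Qed.

Lemma derive2_U0 (x : R) : derive1n 2 (U0 N v) x = lmoment 2 x.
Proof.
rewrite /derive1n /= derive1_U0 derive1E -[RHS]opprK; apply: derive_val.
exact: is_deriveN (is_derive_lmoment 1 x).
Qed.

Let k0_gt0 : (0 < k0)%N. Proof. by case/andP: k0_range. Qed.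
Let vk0_gt0 : 0 < v k0. Proof. by rewrite lt_def vk0_neq0 v_ge0. Qed.

Lemma lmoment_term_le j x :
  k0%:R ^+ j * v k0 * expR (- (k0%:R * x)) <= lmoment j x.
Proof.
apply: (@ler_sum_nat_term _ 1 N.+1 k0) => [|k _]; first by rewrite ltnS.
by rewrite !mulr_ge0 ?exprn_ge0 ?expR_ge0.
Qed.

Lemma lmoment_gt0 j x : 0 < lmoment j x.
Proof.
apply: lt_le_trans (lmoment_term_le j x).
by rewrite !mulr_gt0 ?exprn_gt0 ?expR_gt0 ?ltr0n.
Qed.

Lemma moment_gt0 j : 0 < moment N v j.
Proof. by rewrite -lmoment0 lmoment_gt0. Qed.

Lemma lmoment_le_succ j x : lmoment j x <= lmoment j.+1 x.
Proof.
apply: ler_sum_nat => k /andP[k_ge1 _].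
rewrite ler_wpM2r ?expR_ge0 // ler_wpM2r // exprS ler_peMl ?exprn_ge0 //.
by rewrite ler1n.
Qed.

Lemma moment_le_succ j : moment N v j <= moment N v j.+1.
Proof. by rewrite -!lmoment0 lmoment_le_succ. Qed.

Lemma lmoment_le_moment j x : 0 <= x -> lmoment j x <= moment N v j.
Proof.
move=> x_ge0; rewrite -lmoment0; apply: ler_sum_nat => k _.
rewrite ler_wpM2l ?mulr_ge0 ?exprn_ge0 // mulr0 oppr0 expR0 expR_le1.
by rewrite oppr_le0 mulr_ge0.
Qed.

Lemma moment1_lmoment2_le (x : R) : 0 <= x ->
  moment N v 1 * lmoment 2 x <= moment N v 2 * lmoment 1 x.
Proof.
move=> x_ge0.
have exp_anti i j : (i <= j)%N -> expR (- (j%:R * x)) <= expR (- (i%:R * x)).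
  by move=> ij; rewrite ler_expR lerN2 ler_wpM2r // ler_nat.
have anti i j : (i%:R - j%:R) * (expR (- (i%:R * x)) - expR (- (j%:R * x))) <= 0.
  have [ij|/ltnW ji] := leqP i j.
    by rewrite mulr_le0_ge0 // ?subr_le0 ?subr_ge0 ?ler_nat ?exp_anti.
  by rewrite mulr_ge0_le0 // ?subr_le0 ?subr_ge0 ?ler_nat ?exp_anti.
have := @chebyshev_sum R nat (index_iota 1 N.+1) (fun k => k%:R * v k) (fun k => k%:R)
  (fun k => expR (- (k%:R * x))) (fun k => mulr_ge0 (ler0n _ _) (v_ge0 k)) anti.
have -> : moment N v 1 = \sum_(1 <= k < N.+1) k%:R * v k.
  by apply: eq_bigr => k _; rewrite expr1.
have -> : moment N v 2 = \sum_(1 <= k < N.+1) k%:R * v k * k%:R.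
  by apply: eq_bigr => k _; ring.
have -> : lmoment 1 x = \sum_(1 <= k < N.+1) k%:R * v k * expR (- (k%:R * x)).
  by apply: eq_bigr => k _; rewrite expr1.
have -> // : lmoment 2 x =
    \sum_(1 <= k < N.+1) k%:R * v k * k%:R * expR (- (k%:R * x)).
by apply: eq_bigr => k _; ring.
Qed.

Lemma lmoment1_lt (x y : R) : x < y -> lmoment 1 y < lmoment 1 x.
Proof.
move=> xy; rewrite -subr_gt0 /lmoment -sumrB.
have d_ge0 k : (0 < k)%N ->
    0 <= expR (- (k%:R * x)) - expR (- (k%:R * y)) :> R.
  by move=> k_gt0; rewrite subr_ge0 ler_expR lerN2 ler_pM2l ?ltr0n ?ltW.
apply: lt_le_trans (@ler_sum_nat_term _ 1 N.+1 k0 _ _ _).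
- rewrite -mulrBr mulr_gt0 ?mulr_gt0 ?exprn_gt0 ?ltr0n // subr_gt0.
  by rewrite ltr_expR ltrN2 ltr_pM2l ?ltr0n.
- by rewrite ltnS.
- by move=> k /andP[k_gt0 _]; rewrite -mulrBr mulr_ge0 ?d_ge0 ?mulr_ge0 ?exprn_ge0.
Qed.

(* The change of variables w = -1/U_0'(x) of the definition of the critical core. *)
Definition phi (x : R) : R := (lmoment 1 x)^-1.

Lemma phi_lt : {homo phi : x y / x < y}.
Proof. by move=> x y xy; rewrite /phi ltf_pV2 ?posrE ?lmoment_gt0 ?lmoment1_lt. Qed.

Lemma phi_le : {mono phi : x y / x <= y}.
Proof. exact: le_mono phi_lt. Qed.

Lemma phi0 : phi 0 = (moment N v 1)^-1.
Proof. by rewrite /phi lmoment0. Qed.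

Lemma is_derive_phi (x : R) : is_derive x 1 phi (lmoment 2 x / lmoment 1 x ^+ 2).
Proof.
have := is_deriveV (lt0r_neq0 (lmoment_gt0 1 x)) (is_derive_lmoment 1 x).
by congr is_derive; rewrite /GRing.scale /= mulrNN mulrC.
Qed.

Lemma continuous_phi : continuous (phi : R^o -> R^o).
Proof.
move=> x; apply: differentiable_continuous; apply/derivable1_diffP.
by case: (is_derive_phi x).
Qed.

Lemma lmoment1_le_exp (x : R) : 0 <= x -> lmoment 1 x <= moment N v 1 * expR (- x).
Proof.
move=> x_ge0; rewrite -lmoment0 mulr_suml; apply: ler_sum_nat => k /andP[k_ge1 _].
rewrite mulr0 oppr0 expR0 mulr1 ler_wpM2l ?mulr_ge0 ?exprn_ge0 //.
by rewrite ler_expR lerN2 ler_peMl // ler1n.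
Qed.

Lemma lmoment1_ge_lin (x : R) : x <= 0 -> k0%:R * v k0 * (1 - x) <= lmoment 1 x.
Proof.
move=> x_le0; apply: le_trans (lmoment_term_le 1 x); rewrite expr1.
rewrite ler_wpM2l ?mulr_ge0 // (le_trans _ (expR_ge1Dx _)) // lerD2l.
by rewrite lerN2 ler_neMl // ler1n.
Qed.

Lemma phi_surj (y : R) : 0 < y -> exists x, phi x = y.
Proof.
move=> y_gt0; pose m1 := moment N v 1; pose c := k0%:R * v k0.
have m1_gt0 : 0 < m1 by apply: moment_gt0.
have c_gt0 : 0 < c by rewrite mulr_gt0 ?ltr0n.
pose a := - (c * y)^-1; pose b := m1 * y.
have a_le0 : a <= 0 by rewrite oppr_le0 invr_ge0 mulr_ge0 // ltW.
have b_ge0 : 0 <= b by rewrite mulr_ge0 // ltW.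
have phi_le_y (x : R) : y^-1 <= lmoment 1 x -> phi x <= y.
  by move=> h; rewrite /phi -[y]invrK lef_pV2 ?posrE ?invr_gt0 ?lmoment_gt0.
have y_le_phi (x : R) : lmoment 1 x <= y^-1 -> y <= phi x.
  by move=> h; rewrite /phi -[y]invrK lef_pV2 ?posrE ?invr_gt0 ?lmoment_gt0.
have phi_a : phi a <= y.
  apply: phi_le_y; apply: le_trans (lmoment1_ge_lin _ a_le0).
  by rewrite /a opprK mulrDr mulr1 invfM mulrA mulfV ?gt_eqF // mul1r lerDr ltW.
have y_phi_b : y <= phi b.
  apply: y_le_phi; apply: le_trans (lmoment1_le_exp _ b_ge0) _.
  rewrite expRN -ler_pdivlMl // -invfM lef_pV2 ?posrE ?expR_gt0 ?mulr_gt0 //.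
  by rewrite (le_trans _ (expR_ge1Dx _)) // lerDr.
have y_between : Num.min (phi a) (phi b) <= y <= Num.max (phi a) (phi b).
  by rewrite ge_min phi_a le_max y_phi_b orbT.
have [x _ <-] := IVT (le_trans a_le0 b_ge0)
  (continuous_subspaceT continuous_phi) y_between.
by exists x.
Qed.

Variable E : R -> R.
Hypothesis E_core : is_critical_core N v E.

Local Notation m1 := (moment N v 1).
Local Notation m2 := (moment N v 2).
Local Notation m3 := (moment N v 3).

(* The inverse of phi on (0,oo); it takes the junk value 0 elsewhere. *)
Definition psi (w : R) : R := xget 0 [set x | phi x = w].

Lemma phiK : cancel phi psi.
Proof. by move=> x; apply: (inc_inj phi_le); exact: (@xgetI _ 0 [set z | phi z = phi x] x). Qed.

Lemma psiK (w : R) : 0 < w -> phi (psi w) = w.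
Proof. by move=> /phi_surj w_img; exact: (@xgetPex _ 0 [set z | phi z = w]). Qed.

Lemma psi_ge0 (w : R) : m1^-1 <= w -> 0 <= psi w.
Proof.
move=> w_ge; have w_gt0 : 0 < w by apply: lt_le_trans w_ge; rewrite invr_gt0 moment_gt0.
by rewrite -phi_le psiK // phi0.
Qed.

Definition core (x : R) : R := lmoment 1 x ^+ 3 / lmoment 2 x.

Lemma E_phi (x : R) : E (phi x) = core x.
Proof. by have := E_core x; rewrite derive1_U0 derive2_U0 invrN !opprK. Qed.

Lemma core_bounds (x : R) : 0 <= x ->
  m1 / m2 / phi x ^+ 2 <= core x <= (phi x ^+ 2)^-1.
Proof.
move=> x_ge0; rewrite /core /phi exprVn !invrK.
have s1_gt0 := lmoment_gt0 1 x; have s2_gt0 := lmoment_gt0 2 x.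
have m2_gt0 := moment_gt0 2.
apply/andP; split; rewrite -subr_ge0.
- have -> : lmoment 1 x ^+ 3 / lmoment 2 x - m1 / m2 * lmoment 1 x ^+ 2 =
      lmoment 1 x ^+ 2 * (m2 * lmoment 1 x - m1 * lmoment 2 x) / (m2 * lmoment 2 x).
    by field; rewrite !gt_eqF.
  by rewrite divr_ge0 ?mulr_ge0 ?exprn_ge0 ?subr_ge0 ?moment1_lmoment2_le // ltW.
- have -> : lmoment 1 x ^+ 2 - lmoment 1 x ^+ 3 / lmoment 2 x =
      lmoment 1 x ^+ 2 * (lmoment 2 x - lmoment 1 x) / lmoment 2 x.
    by field; rewrite gt_eqF.
  by rewrite divr_ge0 ?mulr_ge0 ?exprn_ge0 ?subr_ge0 ?lmoment_le_succ // ltW.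
Qed.

Lemma is_derive_core (x : R) : is_derive x 1 core
  (lmoment 1 x ^+ 3 * lmoment 3 x / lmoment 2 x ^+ 2 - 3 * lmoment 1 x ^+ 2).
Proof.
have s2_neq0 := lt0r_neq0 (lmoment_gt0 2 x).
have := is_deriveM (is_deriveX 3 (is_derive_lmoment 1 x))
  (is_deriveV s2_neq0 (is_derive_lmoment 2 x)).
by congr is_derive; rewrite exprfctE /GRing.scale /=; field.
Qed.

Lemma is_derive_E (x : R) : is_derive (phi x) 1 E
  (lmoment 1 x ^+ 2 * lmoment 3 x * (lmoment 1 x / lmoment 2 x) ^+ 3 -
   3 * lmoment 1 x ^+ 3 * (lmoment 1 x / lmoment 2 x)).
Proof.
have s1_gt0 := lmoment_gt0 1 x; have s2_gt0 := lmoment_gt0 2 x.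
have dphi_neq0 : lmoment 2 x / lmoment 1 x ^+ 2 != 0.
  by rewrite lt0r_neq0 // divr_gt0 ?exprn_gt0.
have dpsi : is_derive (phi x) 1 psi (lmoment 2 x / lmoment 1 x ^+ 2)^-1.
  apply: is_derive_inverse dphi_neq0; last exact: is_derive_phi.
  - by near=> y; apply: phiK.
  - by near=> y; apply: continuous_phi.
have phix_gt0 : 0 < phi x by rewrite invr_gt0.
have dcore_psi := is_derive1_comp (is_derive_core (psi (phi x))) dpsi.
rewrite phiK in dcore_psi.
apply: is_derive_eq.
  apply: near_eq_is_derive dcore_psi.
  near=> y; have y_gt0 : 0 < y by near: y; exact: lt_nbhsr phix_gt0.
  by rewrite /= -E_phi psiK.
by field; rewrite !gt_eqF.
Unshelve. all: by end_near.
Qed.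

Lemma E_bounds (w : R) : m1^-1 <= w -> m1 / m2 / w ^+ 2 <= E w <= (w ^+ 2)^-1.
Proof.
move=> w_ge; have w_gt0 : 0 < w by apply: lt_le_trans w_ge; rewrite invr_gt0 moment_gt0.
by rewrite -(psiK w w_gt0) E_phi core_bounds // psi_ge0.
Qed.

Lemma E_derivable_bound (w : R) : m1^-1 <= w ->
  derivable E w 1 /\ `|derive1 E w| <= 4 * m2 ^+ 2 * m3.
Proof.
move=> w_ge; have w_gt0 : 0 < w by apply: lt_le_trans w_ge; rewrite invr_gt0 moment_gt0.
have x_ge0 := psi_ge0 w w_ge; rewrite -(psiK w w_gt0).
have dE := is_derive_E (psi w); split; first by case: dE.
rewrite derive1E derive_val; apply: ler_norm_core_deriv.
- by rewrite lmoment_gt0 lmoment_le_succ.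
- by rewrite ltW ?lmoment_gt0 ?lmoment_le_moment.
- exact: le_trans (lmoment_le_moment 1 _ x_ge0) (moment_le_succ 1).
- exact: moment_le_succ.
Qed.

Lemma E_lipschitz (a b : R) : m1^-1 <= a -> m1^-1 <= b ->
  `|E a - E b| <= 4 * m2 ^+ 2 * m3 * `|a - b|.
Proof.
wlog ab : a b / a <= b.
  move=> Eab a_ge b_ge; have [/Eab->//|/ltW ba] := leP a b.
  by rewrite distrC (distrC a) Eab.
move=> a_ge _; have in_dom y : a <= y -> m1^-1 <= y by apply: le_trans.
rewrite distrC (distrC a).
have [c c_in ->] : exists2 c, c \in `[a, b] & E b - E a = derive1 E c * (b - a).
  apply: MVT_segment ab _ _ => [y|].
    rewrite in_itv /= => /andP[/ltW/in_dom y_ge _].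
    by rewrite derive1E; apply: derivableP; case: (E_derivable_bound _ y_ge).
  apply: continuous_subspace_itv => y; rewrite in_itv /= => /andP[/in_dom y_ge _].
  apply/differentiable_continuous/derivable1_diffP.
  by case: (E_derivable_bound _ y_ge).
rewrite normrM ler_wpM2r //.
by move: c_in; rewrite in_itv /= => /andP[/in_dom/E_derivable_bound[]].
Qed.

End CriticalCore.

Theorem lemma6 (R : realType) (N : nat) (v : nat -> R) (E : R -> R) :
  (forall k, 0 <= v k) ->
  (exists2 k, (1 <= k <= N)%N & v k != 0) ->
  is_critical_core N v E ->
  let m1 := moment N v 1 in
  let m2 := moment N v 2 in
  let m3 := moment N v 3 in
  let D := 4 * m2 ^+ 2 * m3 in
  (forall w, m1^-1 <= w ->
     m1 / m2 / w ^+ 2 <= E w /\ E w <= (w ^+ 2)^-1) /\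
  (forall w, m1^-1 <= w ->
     derivable E w 1 /\ `|derive1 E w| <= D) /\
  (forall w, m1^-1 <= w -> E w <= m1 ^+ 2) /\
  (forall w y, m1^-1 <= y -> y <= w -> m1 / m2 / w ^+ 2 <= E y) /\
  (forall w1 w2, m1^-1 <= w1 -> w1 <= w2 ->
     forall y1 y2, w1 <= y1 <= w2 -> w1 <= y2 <= w2 ->
       E y1 - E y2 <= D * (w2 - w1)).
Proof.
move=> v_ge0 [k0 k0_range vk0_neq0] E_core m1 m2 m3 D.
have E_bnd w w_ge := andP (@E_bounds R N v v_ge0 k0 k0_range vk0_neq0 E E_core w w_ge).
have E_lip := @E_lipschitz R N v v_ge0 k0 k0_range vk0_neq0 E E_core.
have mom_gt0 := @moment_gt0 R N v v_ge0 k0 k0_range vk0_neq0.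
have m1_gt0 : 0 < m1 := mom_gt0 1.
have m1inv_gt0 : 0 < m1^-1 by rewrite invr_gt0.
split; [|split; [|split; [|split]]].
- by move=> w /E_bnd.
- exact: (@E_derivable_bound R N v v_ge0 k0 k0_range vk0_neq0 E E_core).
- move=> w w_ge; have [_ /le_trans->] := E_bnd w w_ge => //.
  by rewrite -[m1 ^+ 2]invrK -[(m1 ^+ 2)^-1]exprVn; apply: lef_inv_sqr.
- move=> w y y_ge yw; have [+ _] := E_bnd y y_ge; apply: le_trans.
  apply: ler_wpM2l; first by rewrite divr_ge0 // ltW // mom_gt0.
  exact: lef_inv_sqr (lt_le_trans m1inv_gt0 y_ge) yw.
- move=> w1 w2 w1_ge _ y1 y2 /andP[y1_ge y1_le] /andP[y2_ge y2_le].
  apply: le_trans (ler_norm _) _.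
  apply: le_trans (E_lip y1 y2 (le_trans w1_ge y1_ge) (le_trans w1_ge y2_ge)) _.
  have D_ge0 : 0 <= D by rewrite !mulr_ge0 ?exprn_ge0 // ltW // mom_gt0.
  by rewrite ler_wpM2l // ler_norml; apply/andP; split; lra.
Qed.
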